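(* For every integer $k$ with $1\le k\le p-1$ and all $s\in\mathcal S_0^{(k)}$, $t\in\mathcal T_0^{(k)}$ one has $\langle s,t\rangle_k^{\rm BD}=\langle s,t\rangle_k^{\rm Boc}$ in $\mathcal Q^k$.
   Context: Let $p$ be a prime, $n\ge1$, $G$ a cyclic group of order $p^n$ with generator $\gamma$, $\mathcal R=\mathbb Z/p^n[G]$, $\mathcal I\subset\mathcal R$ the augmentation ideal, $\mathcal Q^k=\mathcal I^k/\mathcal I^{k+1}$, $N=\sum_{g\in G}g$. For an $\mathcal R$-module $M$, $M^\ast=\mathrm{Hom}_{\mathcal R}(M,\mathcal R)$ and $M_0=M^G$. Let $\mathcal S,\mathcal T$ be finitely generated $\mathcal R$-modules, $X,Y$ free $\mathcal R$-modules of finite rank, and $0\to\mathcal S\to X\xrightarrow{\ell}Y^\ast\to\mathcal T^\ast\to0$ exact; its dual is $0\to\mathcal T\to Y\xrightarrow{\ell^\ast}X^\ast\to\mathcal S^\ast\to0$ with $\ell^\ast(y)(x)=\ell(x)(y)$; we regard $\mathcal S\subset X$, $\mathcal T\subset Y$. Put $\mathcal S_0^{(k)}=\mathcal S_0\cap\mathcal I^{k-1}\mathcal S$, $\mathcal T_0^{(k)}=\mathcal T_0\cap\mathcal I^{k-1}\mathcal T$. Bertolini–Darmon pairing: $D^{(k)}=(-1)^k\sum_{i=0}^{p^n-1}\binom ik\gamma^{i-k}$. For $1\le k\le p-1$, $s\in\mathcal S_0^{(k)}$, $t\in\mathcal T_0^{(k)}$, choose $\tilde s\in\mathcal S$, $\tilde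 t\in\mathcal T$ with $(\gamma-1)^{k-1}\tilde s=s$, $(\gamma-1)^{k-1}\tilde t=t$, and $x_s\in X$, $y_t\in Y$ with $D^{(k-1)}x_s=\tilde s$, $D^{(k-1)}y_t=\tilde t$ (these exist); then $\ell(x_s)(y_t)\in\mathcal I^k$ and $\langle s,t\rangle^{\rm BD}_k$ is its class in $\mathcal Q^k$ (independent of all choices). Bockstein pairing: let $C=[X\xrightarrow{\ell}Y^\ast]$ (degrees 1,2) with filtration $\mathcal I^iC$ and spectral sequence $E_k^{i,j}=Z_k^{i,j}/(Z_{k-1}^{i+1,j-1}+B_{k-1}^{i,j})$, $Z_k^{i,j}=\ker(\mathcal I^iC^{i+j}\to C^{i+j+1}/\mathcal I^{i+k}C^{i+j+1})$, $B_k^{i,j}=\mathcal I^iC^{i+j}\cap d(\mathcal I^{i-k}C^{i+j-1})$ ($\mathcal I^m=\mathcal R$ for $m\le0$), differentials induced by $d$. Thus $E_k^{0,1}=\{x\in X:\ell(x)\in\mathcal I^kY^\ast\}/\{x\in\mathcal IX:\ell(x)\in\mathcal I^kY^\ast\}$, $E_k^{k,2-k}=\mathcal I^kY^\ast/(\mathcal I^{k+1}Y^\ast+\mathcal I^kY^\ast\cap\ell(\mathcal IX))$, and the derived Bockstein map $\beta^{(k)}=d_k^{0,1}$ sends the class of $x$ to the class of $\ell(x)$. Let $F_k^{i,j}$ be the analogous spectral sequence for $D=[Y\xrightarrow{\ell^\ast}X^\ast]$. The paper identifies $E_k^{0,1}\cong\mathcal S_0^{(k)}$ and $F_k^{0,1}\cong\mathcal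 T_0^{(k)}$ via the maps induced by $x\mapsto Nx$, $y\mapsto Ny$, and uses the cup product $E_k^{k,2-k}\times F_k^{0,1}\to\mathcal Q^k$, (class of $f$, class of $y$) $\mapsto f(y)\bmod\mathcal I^{k+1}$, to get $\iota_k:E_k^{k,2-k}\to\mathrm{Hom}(\mathcal T_0^{(k)},\mathcal Q^k)$. Then $\langle s,t\rangle_k^{\rm Boc}:=\iota_k(\beta^{(k)}(s))(t)$. *)

From HB Require Import structures.
From mathcomp Require Import all_boot all_order all_algebra.
Set Implicit Arguments.
Unset Strict Implicit.
Unset Printing Implicit Defensive.
Import GRing.Theory.
Local Open Scope ring_scope.

(* The group ring  R = Z/p^n [G],  G cyclic of order p^n with generator gamma,
   realised as  (Z/p^n)[X] / (X^(p^n) - 1),  gamma = class of X. *)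
Definition grpoly (p n : nat) : {poly 'Z_(p ^ n)} := 'X^(p ^ n) - 1.
Notation GR p n := {poly %/ grpoly p n}.

Definition gam (p n : nat) : GR p n := qpolyX (grpoly p n).

Definition Nel (p n : nat) : GR p n := \sum_(i < p ^ n) gam p n ^+ i.

Definition aug (p n : nat) (r : GR p n) : 'Z_(p ^ n) :=
  (polyn r : {poly 'Z_(p ^ n)}).[1].

Definition augI (p n : nat) (r : GR p n) : Prop := aug r = 0.

Fixpoint idpow (R : comNzRingType) (J : R -> Prop) (k : nat) : R -> Prop :=
  match k with
  | 0 => fun _ => True
  | k'.+1 => fun r => exists (m : nat) (u v : 'I_m -> R),
      (forall l, J (u l) /\ idpow J k' (v l)) /\ r = \sum_(l < m) u l * v l
  end.

Definition Ipow (p n k : nat) : GR p n -> Prop := idpow (@augI p n) k.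
Arguments Ipow : clear implicits.

(* Free modules X = R^a, Y = R^b (vectors of coordinates).  The R-linear map
   ell : X -> Y^* is given by its matrix L : ell(e_i)(e_j) = L i j.
   ell(x) in Y^* is represented by its coordinates in the dual basis. *)
Section Modules.
Variables (p n a b : nat) (L : 'I_a -> 'I_b -> GR p n).

Definition ell (x : 'I_a -> GR p n) : 'I_b -> GR p n :=
  fun j => \sum_(i < a) x i * L i j.
Definition ellT (y : 'I_b -> GR p n) : 'I_a -> GR p n :=
  fun i => \sum_(j < b) L i j * y j.
Definition ellpair (x : 'I_a -> GR p n) (y : 'I_b -> GR p n) : GR p n :=
  \sum_(j < b) ell x j * y j.

Definition inS (x : 'I_a -> GR p n) : Prop := forall j, ell x j = 0.
Definition inT (y : 'I_b -> GR p n) : Prop := forall i, ellT y i = 0.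

Definition Ginv (m : nat) (x : 'I_m -> GR p n) : Prop :=
  forall i, gam p n * x i = x i.

Definition insubmod (m : nat) (J : GR p n -> Prop)
  (M : ('I_m -> GR p n) -> Prop) (x : 'I_m -> GR p n) : Prop :=
  exists (q : nat) (r : 'I_q -> GR p n) (u : 'I_q -> 'I_m -> GR p n),
    (forall l, J (r l) /\ M (u l)) /\
    (forall i, x i = \sum_(l < q) r l * u l i).

Definition S0k (k : nat) (s : 'I_a -> GR p n) : Prop :=
  [/\ inS s, Ginv s & insubmod (Ipow p n k.-1) inS s].
Definition T0k (k : nat) (t : 'I_b -> GR p n) : Prop :=
  [/\ inT t, Ginv t & insubmod (Ipow p n k.-1) inT t].
End Modules.

(* D^(k) = (-1)^k sum_{i=0}^{p^n-1} C(i,k) gamma^(i-k)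
   (terms with i < k vanish since C(i,k) = 0) *)
Definition Dk (p n k : nat) : GR p n :=
  (-1) ^+ k * \sum_(i < p ^ n) ('C(i, k))%:R * gam p n ^+ (i - k).

(* Write sigma = gamma - 1.  The augmentation ideal of Z/p^n[G] is sigma R, so
   I^k = sigma^k R, and the kernel of multiplication by N is exactly I, because
   N r = eps(r) N and N has constant coefficient 1.  Telescoping the binomial
   sums gives sigma D^(j+1) = D^(j) + (-1)^(j+1) C(p^n, j+1) gamma^(p^n-j-1),
   and p^n divides C(p^n, j+1) for j + 1 < p; hence sigma^j D^(j) = N, and
   D^(j) f = 0 forces f into I^(j+1).
   Now N x_s = sigma^(k-1) D^(k-1) x_s = s = N x, so x_s - x lies in I, and
   likewise y_t - y; and D^(k-1) ell(x_s) = ell(tilde s) = 0 puts ell(x_s) in I^k.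
   The difference of the two pairings is
     ell(x_s)(y_t - y) + sum_i (x_s - x)_i ell^*(y)_i,
   a sum of products of elements of I^k and of I, so it lies in I^(k+1). *)

From HB Require Import structures.
From mathcomp Require Import all_boot all_order all_algebra.
From mathcomp Require Import zify ring.
Set Implicit Arguments.
Unset Strict Implicit.
Unset Printing Implicit Defensive.
Import GRing.Theory.
Local Open Scope ring_scope.
Import Pdiv.Ring Pdiv.RingMonic.

Section Divisibility.
Variable R : comNzRingType.

Definition dvdr (d r : R) : Prop := exists q, r = d * q.

Lemma dvdr_mul d e r s : dvdr d r -> dvdr e s -> dvdr (d * e) (r * s).
Proof. by move=> [q ->] [q' ->]; exists (q * q'); rewrite mulrACA. Qed.

Lemma dvdrD d r s : dvdr d r -> dvdr d s -> dvdr d (r + s).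
Proof. by move=> [q ->] [q' ->]; exists (q + q'); rewrite mulrDr. Qed.

Lemma dvdr_sum d m (F : 'I_m -> R) :
  (forall l, dvdr d (F l)) -> dvdr d (\sum_(l < m) F l).
Proof.
move=> dF; apply: (big_ind (dvdr d)) => [||l _]; [|exact: dvdrD|exact: dF].
by exists 0; rewrite mulr0.
Qed.

Lemma idpow_principal (J : R -> Prop) c :
  (forall r, J r <-> dvdr c r) -> forall k r, idpow J k r <-> dvdr (c ^+ k) r.
Proof.
move=> Jc; elim=> [|k IH] r /=.
  by split=> // _; exists r; rewrite mul1r.
split=> [[m [u [v [uv ->]]]]|[q ->]].
  apply: dvdr_sum => l; have [/Jc du /IH dv] := uv l.
  by rewrite exprS; apply: dvdr_mul.
exists 1%N, (fun=> c), (fun=> c ^+ k * q); split; last by rewrite big_ord1 exprS mulrA.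
by move=> _; split; [apply/Jc; exists 1; rewrite mulr1 | apply/IH; exists q].
Qed.

Lemma dvdr_ann (c N D : R) j f :
  (forall g, N * g = 0 -> dvdr c g) -> c ^+ j * D = N ->
  D * f = 0 -> dvdr (c ^+ j.+1) f.
Proof.
move=> kerN cjD Df.
suff: forall i, (i <= j.+1)%N -> dvdr (c ^+ i) f by apply.
elim=> [|i IH] lt_ij; first by exists f; rewrite mul1r.
have [g fE] := IH (ltnW lt_ij).
have /kerN [q gE] : N * g = 0.
  rewrite -cjD -(subnK (lt_ij : (i <= j)%N)) exprD -!mulrA.
  by rewrite [c ^+ i * _]mulrCA -fE Df !mulr0.
by exists q; rewrite fE gE mulrA -exprSr.
Qed.

End Divisibility.

Section BinomialSums.
Variables (R : comNzRingType) (g : R).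

Definition binsum (m j : nat) : R := \sum_(i < m) 'C(i, j)%:R * g ^+ (i - j).

Lemma binsum0 m : binsum m 0 = \sum_(i < m) g ^+ i.
Proof. by apply: eq_bigr => i _; rewrite bin0 mul1r subn0. Qed.

Lemma mulr_binsumS m j :
  (g - 1) * binsum m j.+1 = 'C(m, j.+1)%:R * g ^+ (m - j.+1) - binsum m j.
Proof.
pose f i := 'C(i, j.+1)%:R * g ^+ (i - j.+1).
have gf i : g * f i = f i.+1 - 'C(i, j)%:R * g ^+ (i - j).
  rewrite /f binS natrD subSS mulrDl addrK.
  have [lt_ji|le_ij] := ltnP j i; first by rewrite mulrCA -exprS -subSn.
  by rewrite bin_small ?ltnS // !mul0r mulr0.
have shift : \sum_(i < m) f i.+1 = binsum m j.+1 + f m.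
  have recr : \sum_(i < m.+1) f i = binsum m j.+1 + f m by rewrite big_ord_recr.
  by rewrite -recr big_ord_recl {2}/f mul0r add0r.
rewrite mulrBl mul1r mulr_sumr.
under eq_bigr do rewrite gf.
by rewrite sumrB shift -/(binsum m j) /f; ring.
Qed.

End BinomialSums.

Lemma pexp_dvd_bin p e m : prime p -> (0 < m < p)%N -> (p ^ e %| 'C(p ^ e, m))%N.
Proof.
move=> p_pr /andP[m_gt0 lt_mp].
have cop : coprime (p ^ e) m.
  by rewrite coprimeXl // prime_coprime //; apply/negP => /dvdn_leq; lia.
rewrite -(Gauss_dvdr _ cop); case: m m_gt0 {lt_mp cop} => // m _.
by rewrite -mul_bin_diag dvdn_mulr.
Qed.

Section GroupRing.
Variables (p n : nat).
Hypotheses (p_pr : prime p) (n_gt0 : (0 < n)%N).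

Local Notation R := (GR p n).
Local Notation sigma := (gam p n - 1).

Lemma pexpn_gt1 : (1 < p ^ n)%N.
Proof. by rewrite -{1}(expn0 p) ltn_exp2l ?prime_gt1. Qed.

Lemma grpoly_monic : grpoly p n \is monic.
Proof. by rewrite /grpoly -polyC1 monicXnsubC // expn_gt0 prime_gt0. Qed.

Lemma mk_monic_grpoly : mk_monic (grpoly p n) = grpoly p n.
Proof.
rewrite /mk_monic grpoly_monic andbT /grpoly -polyC1 size_XnsubC ?expn_gt0 ?prime_gt0 //.
by rewrite ltnS ltnW // pexpn_gt1.
Qed.

Lemma polynK (r : R) : in_qpoly (grpoly p n) (polyn r) = r.
Proof. by apply: val_inj; apply: in_qpoly_small; apply: size_mk_monic. Qed.

Lemma aug_in_qpoly (q : {poly 'Z_(p ^ n)}) : aug (in_qpoly (grpoly p n) q) = q.[1].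
Proof.
rewrite /aug /= mk_monic_grpoly [in RHS](rdivp_eq grpoly_monic q).
by rewrite hornerD hornerM /grpoly !hornerE expr1n subrr mulr0 add0r.
Qed.

Lemma augI_dvdr (r : R) : augI r <-> dvdr sigma r.
Proof.
have sigmaE : sigma = in_qpoly (grpoly p n) ('X - 1) by rewrite rmorphB rmorph1.
split=> [r1|[q ->]].
  have /factor_theorem [q rE] : root (polyn r) 1 by rewrite rootE; apply/eqP.
  exists (in_qpoly (grpoly p n) q).
  by rewrite -(polynK r) rE rmorphM polyC1 sigmaE mulrC.
rewrite /augI -(polynK q) sigmaE -rmorphM aug_in_qpoly.
by rewrite hornerM !hornerE subrr mul0r.
Qed.

Lemma Ipow_dvdr k (r : R) : Ipow p n k r <-> dvdr (sigma ^+ k) r.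
Proof. exact: idpow_principal augI_dvdr k r. Qed.

Lemma gam_expn : gam p n ^+ (p ^ n) = 1.
Proof.
have grpoly0 : in_qpoly (grpoly p n) (grpoly p n) = 0.
  by apply: val_inj; rewrite /= mk_monic_grpoly; apply: rmodpp grpoly_monic.
have XE : 'X^(p ^ n) = grpoly p n + 1 by rewrite /grpoly subrK.
have -> : gam p n ^+ (p ^ n) = in_qpoly (grpoly p n) 'X^(p ^ n) by rewrite rmorphXn.
by rewrite XE in_qpolyD in_qpoly1 grpoly0 add0r.
Qed.

Lemma sigma_mulN : sigma * Nel p n = 0.
Proof. by rewrite -subrX1 gam_expn subrr. Qed.

Lemma mulN_aug (r : R) : Nel p n * r = aug r *: Nel p n.
Proof.
set c := aug r.
have [q rE] : dvdr sigma (r - c *: 1).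
  apply/augI_dvdr; rewrite /augI -(polynK r) -in_qpoly1 -in_qpolyZ -linearB /=.
  by rewrite aug_in_qpoly alg_polyC hornerD hornerN hornerC subrr.
rewrite -(subrK (c *: 1) r) rE mulrDr mulrA [_ * sigma]mulrC sigma_mulN mul0r add0r.
by rewrite -scalerAr mulr1.
Qed.

Lemma Nel_coef0 : (polyn (Nel p n))`_0 = 1.
Proof.
have NE : Nel p n = in_qpoly (grpoly p n) (\poly_(i < p ^ n) 1).
  rewrite poly_def rmorph_sum; apply: eq_bigr => i _.
  by rewrite scale1r rmorphXn.
rewrite NE in_qpoly_small ?coef_poly ?expn_gt0 ?prime_gt0 // mk_monic_grpoly.
by rewrite /grpoly -polyC1 size_XnsubC ?expn_gt0 ?prime_gt0 // ltnS size_poly.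
Qed.

Lemma kerNel (r : R) : Nel p n * r = 0 -> dvdr sigma r.
Proof.
rewrite mulN_aug => /(congr1 (fun x : R => (polyn x)`_0)).
by rewrite poly_of_qpolyZ coefZ Nel_coef0 mulr1 coef0 => r0; apply/augI_dvdr.
Qed.

Lemma natr_bin_pexpn m : (0 < m < p)%N -> 'C(p ^ n, m)%:R = 0 :> R.
Proof.
move=> /(pexp_dvd_bin n p_pr)/dvdnP[d ->].
by rewrite natrM -(@scaler_nat 'Z_(p ^ n) R (p ^ n)) (pchar_Zp pexpn_gt1) scale0r mulr0.
Qed.

Lemma DkE j : Dk p n j = (-1) ^+ j * binsum (gam p n) (p ^ n) j.
Proof. by []. Qed.

Lemma Dk_step j : (j.+1 < p)%N -> sigma * Dk p n j.+1 = Dk p n j.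
Proof.
move=> lt_jp; rewrite !DkE mulrCA mulr_binsumS natr_bin_pexpn //.
by rewrite mul0r sub0r exprS mulN1r mulNr mulrN opprK.
Qed.

Lemma sigmaX_Dk j : (j < p)%N -> sigma ^+ j * Dk p n j = Nel p n.
Proof.
elim: j => [_|j IH lt_jp]; first by rewrite mul1r DkE mul1r binsum0.
by rewrite exprSr -mulrA Dk_step // IH // ltnW.
Qed.

Lemma Dk_ann j (f : R) : (j < p)%N -> Dk p n j * f = 0 -> dvdr (sigma ^+ j.+1) f.
Proof. by move=> lt_jp; apply: dvdr_ann kerNel (sigmaX_Dk lt_jp). Qed.

End GroupRing.

Section Pairing.
Variables (p n a b : nat) (L : 'I_a -> 'I_b -> GR p n).

Lemma ellpair_ellT x y : ellpair L x y = \sum_(i < a) x i * ellT L y i.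
Proof.
rewrite /ellpair /ell /ellT; under eq_bigr do rewrite mulr_suml.
rewrite exchange_big; apply: eq_bigr => i _; rewrite mulr_sumr.
by apply: eq_bigr => j _; rewrite mulrA.
Qed.

Lemma ellpairB x' x y' y :
  ellpair L x' y' - ellpair L x y =
  \sum_(j < b) ell L x' j * (y' j - y j) + \sum_(i < a) (x' i - x i) * ellT L y i.
Proof.
rewrite -(subrKA (ellpair L x' y)); congr (_ + _).
  by rewrite /ellpair -sumrB; apply: eq_bigr => j _; rewrite mulrBr.
by rewrite !ellpair_ellT -sumrB; apply: eq_bigr => i _; rewrite mulrBl.
Qed.

End Pairing.

Theorem theoremB5 (p n : nat) (Hp : prime p) (Hn : (0 < n)%N)
  (a b : nat) (L : 'I_a -> 'I_b -> GR p n) (k : nat)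
  (Hk1 : (1 <= k)%N) (Hk2 : (k <= p - 1)%N)
  (s st xs x : 'I_a -> GR p n) (t tt yt y : 'I_b -> GR p n) :
  S0k L k s -> T0k L k t ->
  (* BD choices *)
  inS L st -> (forall i, (gam p n - 1) ^+ (k - 1) * st i = s i) ->
  inT L tt -> (forall j, (gam p n - 1) ^+ (k - 1) * tt j = t j) ->
  (forall i, Dk p n (k - 1) * xs i = st i) ->
  (forall j, Dk p n (k - 1) * yt j = tt j) ->
  (* Bockstein choices *)
  (forall j, Ipow p n k (ell L x j)) -> (forall i, Nel p n * x i = s i) ->
  (forall i, Ipow p n k (ellT L y i)) -> (forall j, Nel p n * y j = t j) ->
  Ipow p n k.+1 (ellpair L xs yt - ellpair L x y).
Proof.
(* S0k, T0k, inT tt and ell x in I^k only guarantee that the choices exist. *)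
move=> _ _ st_S st_s _ tt_t xs_st yt_tt _ Nx_s ellTy_k Ny_t.
have lt_k1p : (k - 1 < p)%N by lia.
have sigma_dvd_xs_x i : dvdr (gam p n - 1) (xs i - x i).
  apply: (kerNel Hp Hn).
  by rewrite mulrBr Nx_s -st_s -xs_st mulrA (sigmaX_Dk Hp Hn) ?subrr.
have sigma_dvd_yt_y j : dvdr (gam p n - 1) (yt j - y j).
  apply: (kerNel Hp Hn).
  by rewrite mulrBr Ny_t -tt_t -yt_tt mulrA (sigmaX_Dk Hp Hn) ?subrr.
have ell_xs j : dvdr ((gam p n - 1) ^+ k) (ell L xs j).
  rewrite -(subnK Hk1) addn1; apply: (Dk_ann Hp Hn lt_k1p).
  by rewrite -(st_S j) /ell mulr_sumr; apply: eq_bigr => i _; rewrite mulrA xs_st.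
apply/(Ipow_dvdr Hp Hn); rewrite ellpairB; apply: dvdrD; apply: dvdr_sum => l.
  by rewrite exprSr; apply: dvdr_mul.
by rewrite exprS; apply: dvdr_mul => //; apply/(Ipow_dvdr Hp Hn).
Qed.
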